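(* Let $n,m\ge 1$, let $\mathbf y\in\{0,1\}^n$ be fixed training labels, let $\Psi\in\mathbb R^{m\times n}$ be a feature matrix, and let $\mathrm{metric}$ be of the form $$\mathrm{metric}(\hat{\mathbf y},\check{\mathbf y})=\sum_{j=1}^{J}\frac{a_j\,\mathrm{TP}+b_j\,\mathrm{TN}+f_j(\mathrm{PP},\mathrm{AP})}{g_j(\mathrm{PP},\mathrm{AP})}.$$ Then $$\max_{\theta\in\mathbb R^m}\ \min_{\mathcal Q}\ \max_{\mathcal P}\ \mathbb E_{\hat{\mathbf Y}\sim\mathcal P,\check{\mathbf Y}\sim\mathcal Q}\Big[\mathrm{metric}(\hat{\mathbf Y},\check{\mathbf Y})-\theta^\top\big(\Psi\check{\mathbf Y}-\Psi\mathbf y\big)\Big]$$ (where $\mathcal P,\mathcal Q$ range over all probability distributions on $\{0,1\}^n$ and $\hat{\mathbf Y},\check{\mathbf Y}$ are independent) is equal to $$\max_{\theta\in\mathbb R^m}\Big\{\min_{\mathbf Q\in\Delta}\max_{\mathbf P\in\Delta}\Big[\sum_{k=0}^n\sum_{l=0}^n\sum_{j=1}^J\frac{1}{g_j(k,l)}\Big\{a_j[\mathbf p_k^1\cdot\mathbf q_l^1]+b_j[\mathbf p_k^0\cdot\mathbf q_l^0]+f_j(k,l)r_ks_l\Big\}-\langle\mathbf Q^\top\mathbf 1,\Psi^\top\theta\rangle\Big]+\langle\mathbf y,\Psi^\top\theta\rangle\Big\}.$$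
   Context: For $\hat{\mathbf y},\check{\mathbf y}\in\{0,1\}^n$: $\mathrm{TP}=\sum_i\hat y_i\check y_i$, $\mathrm{TN}=\sum_i(1-\hat y_i)(1-\check y_i)$, $\mathrm{PP}=\sum_i\hat y_i$, $\mathrm{AP}=\sum_i\check y_i$; $a_j,b_j\in\mathbb R$ and $f_j,g_j:\{0,\dots,n\}^2\to\mathbb R$ with $g_j$ never zero. Features: the feature of the whole label vector is $\phi(\mathbf x,\mathbf y)=\sum_i\phi(x_i,y_i)$ with $\phi(x_i,0)=0$, and the $i$-th column of $\Psi$ is $\phi(x_i,1)\in\mathbb R^m$, so $\phi(\mathbf x,\mathbf y)=\Psi\mathbf y$. The set $\Delta\subset\mathbb R^{n\times n}$ (entries $p_{i,k}$, $i,k\in\{1,\dots,n\}$) is $$\Delta=\Big\{\mathbf P:\ p_{i,k}\ge 0\ \forall i,k;\ \ p_{i,k}\le\tfrac1k\textstyle\sum_{j}p_{j,k}\ \forall i,k;\ \ \sum_k\tfrac1k\sum_ip_{i,k}\le 1\Big\}.$$ From $\mathbf P\in\Delta$ one defines: $\mathbf p_k^1=\mathbf P_{(:,k)}$ for $k\ge1$ and $\mathbf p_0^1=\mathbf 0$; $r_k=\frac1k\mathbf 1^\top\mathbf p_k^1$ for $k\ge1$ and $r_0=1-\sum_{k=1}^n r_k$; $\mathbf p_k^0=r_k\mathbf 1-\mathbf p_k^1$ for $k\in\{0,\dots,n\}$. The quantities $\mathbf q_l^1,\mathbf q_l^0,s_l$ are defined from $\mathbf Q$ in the same way. (These represent $(\mathbf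 p_k^a)_i=\mathcal P(\hat Y_i=a,\sum\hat Y=k)$ and $r_k=\mathcal P(\sum\hat Y=k)$.) *)

From HB Require Import structures.
From mathcomp Require Import all_boot all_order all_algebra.
From mathcomp Require Import all_classical all_reals.
From mathcomp Require Import ereal.
Set Implicit Arguments. Unset Strict Implicit. Unset Printing Implicit Defensive.
Import Order.TTheory GRing.Theory Num.Theory.
Local Open Scope ring_scope.
Local Open Scope classical_set_scope.

Section Defs.
Variable R : realType.

Definition lab (n : nat) := {ffun 'I_n -> bool}.

Definition TP n (yh yc : lab n) : nat := \sum_(i < n) (yh i && yc i).
Definition TN n (yh yc : lab n) : nat := \sum_(i < n) (~~ yh i && ~~ yc i).
Definition PP n (yh : lab n) : nat := \sum_(i < n) yh i.
Definition AP n (yc : lab n) : nat := \sum_(i < n) yc i.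

Definition metric n J (a b : 'I_J -> R) (f g : 'I_J -> nat -> nat -> R)
    (yh yc : lab n) : R :=
  \sum_(j < J) (a j * (TP yh yc)%:R + b j * (TN yh yc)%:R
                 + f j (PP yh) (AP yc)) / g j (PP yh) (AP yc).

Definition labvec n (y : lab n) : 'cV[R]_n := \col_i (y i)%:R.

Definition dotc m (u v : 'cV[R]_m) : R := \sum_(i < m) u i 0 * v i 0.

Definition is_dist n (P : lab n -> R) : Prop :=
  (forall x, 0 <= P x) /\ \sum_(x : lab n) P x = 1.

Definition game_value n m (J : nat) (a b : 'I_J -> R) (f g : 'I_J -> nat -> nat -> R) (Psi : 'M[R]_(m, n)) (y : lab n)
    (theta : 'cV[R]_m) (P Q : lab n -> R) : R :=
  \sum_(yh : lab n) \sum_(yc : lab n) P yh * Q yc *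
    (metric a b f g yh yc - dotc theta (Psi *m (labvec yc - labvec y))).

(* The set Delta; column index k : 'I_n stands for the count k+1 *)
Definition inDelta n (P : 'M[R]_n) : Prop :=
  [/\ (forall i k, 0 <= P i k),
      (forall i k, P i k <= (k.+1)%:R^-1 * \sum_(j < n) P j k) &
      \sum_(k < n) (k.+1)%:R^-1 * \sum_(i < n) P i k <= 1].

(* p_k^1 for k in {0,...,n}; p_0^1 = 0 *)
Definition p1 n (P : 'M[R]_n) (k : nat) (i : 'I_n) : R :=
  if (0 < k)%N then
    (if @insub _ (fun x => (x < n)%N) 'I_n k.-1 is Some o then P i o else 0)
  else 0.

Definition rpos n (P : 'M[R]_n) (k : nat) : R :=
  k%:R^-1 * \sum_(i < n) p1 P k i.

Definition rr n (P : 'M[R]_n) (k : nat) : R :=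
  if k == 0%N then 1 - \sum_(1 <= k' < n.+1) rpos P k' else rpos P k.

Definition p0 n (P : 'M[R]_n) (k : nat) (i : 'I_n) : R := rr P k - p1 P k i.

Definition dotn n (u v : 'I_n -> R) : R := \sum_(i < n) u i * v i.

Definition PsiTtheta n m (Psi : 'M[R]_(m, n)) (theta : 'cV[R]_m) (i : 'I_n) : R :=
  \sum_(d < m) Psi d i * theta d 0.

(* marginal vector of Q: i-th entry = sum_k q_{i,k} = P(Yc_i = 1) *)
Definition marg n (Q : 'M[R]_n) (i : 'I_n) : R := \sum_(k < n) Q i k.

Definition marg_objective n m (J : nat) (a b : 'I_J -> R) (f g : 'I_J -> nat -> nat -> R)
    (Psi : 'M[R]_(m, n)) (theta : 'cV[R]_m) (P Q : 'M[R]_n) : R :=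
  \sum_(0 <= k < n.+1) \sum_(0 <= l < n.+1) \sum_(j < J)
     (g j k l)^-1 * (a j * dotn (p1 P k) (p1 Q l)
                     + b j * dotn (p0 P k) (p0 Q l)
                     + f j k l * rr P k * rr Q l)
  - dotn (marg Q) (PsiTtheta Psi theta).

End Defs.

From HB Require Import structures.
From mathcomp Require Import all_boot all_order all_algebra.
From mathcomp Require Import all_classical all_reals.
From mathcomp Require Import ereal.
From mathcomp Require Import ring lra.
Import Order.TTheory GRing.Theory Num.Theory.
Set Implicit Arguments. Unset Strict Implicit. Unset Printing Implicit Defensive.
Local Open Scope ring_scope.
Local Open Scope classical_set_scope.

(* Write M(P) for the n x n matrix of the probabilities P(Y_i = 1, sum Y = k + 1) of a
   distribution P on {0,1}^n.  M maps the distributions onto Delta.  Column k of a point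
   of Delta, with mass r = (sum of the column) / (k + 1), lies in the scaled hypersimplex
   {v in [0, r]^n | sum v = (k + 1) r}, and every point of a hypersimplex is the vector of
   marginals of a measure carried by the label vectors with exactly k + 1 ones.  This is
   proved by induction on n, splitting on the first label: the marginals of the two
   conditional measures are found inside a box by an intermediate value argument.
   On the other hand, for independent P and Q the expected metric and feature term are
   bilinear and depend on P and Q only through M(P) and M(Q), where they coincide with the
   objective over Delta up to the constant theta^T Psi y.  Hence the inner optimisations of
   both sides range over the same values. *)

Section LabelVectors.
Variable n : nat.

Definition cons_lab (b : bool) (x : lab n) : lab n.+1 :=
  [ffun i => if unlift ord0 i is Some j then x j else b].

Definition behead_lab (x : lab n.+1) : lab n := [ffun j => x (lift ord0 j)].

Definition zero_lab : lab n := [ffun => false].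

Lemma cons_lab0 b x : cons_lab b x ord0 = b.
Proof. by rewrite ffunE unlift_none. Qed.

Lemma cons_labS b x j : cons_lab b x (lift ord0 j) = x j.
Proof. by rewrite ffunE liftK. Qed.

Lemma cons_labK b : cancel (cons_lab b) behead_lab.
Proof. by move=> x; apply/ffunP => j; rewrite ffunE cons_labS. Qed.

Lemma behead_labK (x : lab n.+1) : cons_lab (x ord0) (behead_lab x) = x.
Proof.
apply/ffunP => i; rewrite ffunE.
by case: (unliftP ord0 i) => [j ->|->]; rewrite ?ffunE.
Qed.

Lemma sum_lab_head (V : nmodType) (F : bool -> lab n -> V) :
  \sum_(x : lab n.+1) F (x ord0) (behead_lab x) = \sum_x F true x + \sum_x F false x.
Proof.
rewrite (reindex (fun p : bool * lab n => cons_lab p.1 p.2)) /=; last first.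
  exists (fun x : lab n.+1 => (x ord0, behead_lab x)) => [[b x] _|x _] /=.
    by rewrite cons_lab0 cons_labK.
  exact: behead_labK.
rewrite (eq_bigr (fun p => F p.1 p.2)) => [|[b x] _]; last first.
  by rewrite /= cons_lab0 cons_labK.
by rewrite -(pair_bigA _ F) big_bool.
Qed.

Lemma PP_cons_lab b x : PP (cons_lab b x) = (b + PP x)%N.
Proof.
rewrite /PP big_ord_recl cons_lab0; congr (_ + _)%N.
by apply: eq_bigr => j _; rewrite cons_labS.
Qed.

Lemma PP_le (x : lab n) : (PP x <= n)%N.
Proof.
rewrite -[X in (_ <= X)%N]card_ord -sum1_card.
by apply: leq_sum => i _; apply: leq_b1.
Qed.

Lemma lab_le_PP (x : lab n) i : (x i <= PP x)%N.
Proof. by rewrite /PP (bigD1 i) //= leq_addr. Qed.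

Lemma PP_zero_lab : PP zero_lab = 0%N.
Proof. by apply: big1 => i _; rewrite ffunE. Qed.

End LabelVectors.

Lemma sum_in_box (R : realFieldType) n (lo hi : 'I_n -> R) t :
  (forall i, lo i <= hi i) -> \sum_i lo i <= t <= \sum_i hi i ->
  exists2 u : 'I_n -> R, forall i, lo i <= u i <= hi i & \sum_i u i = t.
Proof.
move=> lohi /andP[tlo thi].
have [eq_sums|neq_sums] := eqVneq (\sum_i hi i) (\sum_i lo i).
  exists lo => [i|]; first by rewrite lexx lohi.
  by apply/le_anti; rewrite tlo -eq_sums thi.
have gap_gt0 : 0 < \sum_i hi i - \sum_i lo i.
  by rewrite subr_gt0 lt_neqAle eq_sym neq_sums (le_trans tlo thi).
pose lam := (t - \sum_i lo i) / (\sum_i hi i - \sum_i lo i).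
have lam_ge0 : 0 <= lam by apply: divr_ge0; [rewrite subr_ge0 | exact: ltW].
have lam_le1 : lam <= 1 by rewrite ler_pdivrMr // mul1r lerD2r.
exists (fun i => lo i + lam * (hi i - lo i)) => [i|].
  by apply/andP; split; have := lohi i; nra.
rewrite big_split /= -mulr_sumr sumrB mulfVK ?gt_eqF //.
by rewrite addrC subrK.
Qed.

Lemma sum_excess_le (R : realDomainType) n (v : 'I_n -> R) (r a : R) (K : nat) :
  (forall j, 0 <= v j <= r) -> 0 <= a <= r ->
  \sum_j Num.max 0 (v j - a) <= Num.max (K%:R * (r - a)) (\sum_j v j - K.+1%:R * a).
Proof.
move=> v_bnd /andP[a_ge0 a_le_r]; pose S := [pred j | a < v j].
have -> : \sum_j Num.max 0 (v j - a) = \sum_(j in S) (v j - a).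
  rewrite [RHS]big_mkcond /=; apply: eq_bigr => j _; rewrite /S inE.
  by case: ltP => ?; [rewrite max_r | rewrite max_l] => //; lra.
have [small|large] := leqP #|S| K.
- rewrite le_max; apply/orP; left.
  apply: (@le_trans _ _ (\sum_(j in S) (r - a))).
    by apply: ler_sum => j _; have := v_bnd j; lra.
  rewrite sumr_const -[X in X <= _]mulr_natl; apply: ler_wpM2r; [lra | by rewrite ler_nat].
- rewrite le_max; apply/orP; right.
  rewrite sumrB sumr_const -[a *+ _]mulr_natl lerB //.
    rewrite [leRHS](bigID S) /= lerDl.
    by apply: sumr_ge0 => j _; have := v_bnd j; lra.
  by apply: ler_wpM2r; rewrite // ler_nat.
Qed.

Definition layer_measure (R : numDomainType) n (w : lab n -> R) (k : nat) (r : R)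
    (v : 'I_n -> R) :=
  [/\ forall x, 0 <= w x, forall x, w x != 0 -> PP x = k,
      \sum_x w x = r & forall i, \sum_x w x * (x i)%:R = v i].

Section LayerMeasures.
Variable R : realFieldType.

Lemma layer_measure_zero_lab n (r : R) (v : 'I_n -> R) :
  0 <= r -> (forall i, v i = 0) ->
  layer_measure (fun x => if x == zero_lab n then r else 0) 0 r v.
Proof.
move=> r_ge0 v0; split.
- by move=> x; case: eqP.
- by move=> x; case: ifP => [/eqP -> _|_ /eqP //]; apply: PP_zero_lab.
- by rewrite -big_mkcond big_pred1_eq.
- move=> i; rewrite v0; apply: big1 => x _.
  by case: eqP => [->|_]; rewrite ?ffunE ?mulr0 ?mul0r.
Qed.

Lemma layer_measure_cons n k (wt wf : lab n -> R) rt rf u z r (v : 'I_n.+1 -> R) :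
  layer_measure wt k rt u -> layer_measure wf k.+1 rf z ->
  r = rt + rf -> v ord0 = rt -> (forall j, v (lift ord0 j) = u j + z j) ->
  layer_measure (fun x => if x ord0 then wt (behead_lab x) else wf (behead_lab x))
    k.+1 r v.
Proof.
move=> [wt_ge0 wt_supp wt_mass wt_marg] [wf_ge0 wf_supp wf_mass wf_marg] -> v0 vS.
split.
- by move=> x; case: ifP.
- move=> x; rewrite -[in PP x](behead_labK x) PP_cons_lab.
  by case: (x ord0) => w_neq0; [rewrite add1n wt_supp | rewrite add0n wf_supp].
- have /= -> := sum_lab_head (fun b y => if b then wt y else wf y).
  by rewrite wt_mass wf_mass.
- move=> i; case: (unliftP ord0 i) => [j ->|->].
    rewrite (eq_bigr (fun x : lab n.+1 =>
      (if x ord0 then wt (behead_lab x) else wf (behead_lab x)) * (behead_lab x j)%:R));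
      last by move=> x _; rewrite ffunE.
    have /= -> := sum_lab_head (fun b y => (if b then wt y else wf y) * (y j)%:R).
    by rewrite wt_marg wf_marg vS.
  have /= -> := sum_lab_head (fun b y => (if b then wt y else wf y) * (b : nat)%:R).
  rewrite [X in _ + X]big1 => [|x _]; last by rewrite mulr0.
  by rewrite addr0 v0 -wt_mass; apply: eq_bigr => x _; rewrite mulr1.
Qed.

Lemma hypersimplex_split n k (r p : R) (v : 'I_n -> R) :
  0 <= p <= r -> (forall j, 0 <= v j <= r) -> \sum_j v j = k.+1%:R * r - p ->
  exists2 u : 'I_n -> R,
    forall j, 0 <= u j <= p /\ 0 <= v j - u j <= r - p & \sum_j u j = k%:R * p.
Proof.
move=> p_bnd v_bnd v_sum; have /andP[p_ge0 p_le_r] := p_bnd.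
have rp_bnd : 0 <= r - p <= r by apply/andP; split; lra.
pose lo j := Num.max 0 (v j - (r - p)).
pose hi j := Num.min p (v j).
have lo_le_hi j : lo j <= hi j.
  rewrite ge_max !le_min; case/andP: (v_bnd j) => *.
  by apply/and3P; split; [apply/andP; split | |]; lra.
have sum_lo : \sum_j lo j <= k%:R * p.
  have := sum_excess_le k v_bnd rp_bnd.
  by rewrite v_sum maxEle -!nat1r; case: ifP => _ ?; lra.
have sum_hi : k%:R * p <= \sum_j hi j.
  have -> : \sum_j hi j = \sum_j v j - \sum_j Num.max 0 (v j - p).
    rewrite -sumrB; apply: eq_bigr => j _; rewrite /hi minEle maxEle.
    by case: (leP p (v j)) => ?; case: ifP => /= ?; lra.
  have := sum_excess_le k.+1 v_bnd p_bnd.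
  by rewrite v_sum maxEle -!nat1r; case: ifP => _ ?; lra.
have [|u u_box u_sum] := sum_in_box (t := k%:R * p) lo_le_hi.
  by rewrite sum_lo sum_hi.
exists u => // j; case/andP: (u_box j); rewrite ge_max le_min.
by case/andP: (v_bnd j) => ? ? /andP[? ?] /andP[? ?]; split; apply/andP; split; lra.
Qed.

Theorem hypersimplex_layer_measure n k (r : R) (v : 'I_n -> R) :
  0 <= r -> (forall i, 0 <= v i <= r) -> \sum_i v i = k%:R * r ->
  exists w, layer_measure w k r v.
Proof.
elim: n k r v => [|n IH] [|k] r v r_ge0 v_bnd v_sum.
- by eexists; apply: layer_measure_zero_lab => // -[].
- have r0 : r = 0.
    by move/eqP: v_sum; rewrite big_ord0 eq_sym mulf_eq0 pnatr_eq0 => /eqP.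
  exists (fun=> 0); split=> [x||//|[]]; rewrite ?eqxx //.
  by rewrite big1 ?r0.
- eexists; apply: layer_measure_zero_lab => // i.
  have v_ge0 j : 0 <= v j by case/andP: (v_bnd j).
  by apply: (psumr_eq0P (P := xpredT) (fun j _ => v_ge0 j)); rewrite // v_sum mul0r.
pose p := v ord0; pose v' j := v (lift ord0 j).
have p_bnd : 0 <= p <= r := v_bnd ord0.
have v'_sum : \sum_j v' j = k.+1%:R * r - p.
  by move: v_sum; rewrite big_ord_recl /v' /p; lra.
have [u u_bnd u_sum] := hypersimplex_split p_bnd (fun j => v_bnd (lift ord0 j)) v'_sum.
have [wt wt_layer] : exists wt, layer_measure wt k p u.
  by apply: IH u_sum => [|j]; [case/andP: p_bnd | case: (u_bnd j)].
have [wf wf_layer] : exists wf, layer_measure wf k.+1 (r - p) (fun j => v' j - u j).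
  apply: IH => [|j|]; first by case/andP: p_bnd => *; lra.
    by case: (u_bnd j).
  by rewrite sumrB u_sum v'_sum; ring.
by eexists; apply: (layer_measure_cons wt_layer wf_layer) => [||j]; rewrite ?subrKC.
Qed.

End LayerMeasures.

Section Expectation.
Variables (R : numDomainType) (n : nat).
Implicit Types (P Q w : lab n -> R) (F G : lab n -> R).

Definition expect P F : R := \sum_x P x * F x.

Lemma expect_ge0 P F : (forall x, 0 <= P x) -> (forall x, 0 <= F x) -> 0 <= expect P F.
Proof. by move=> P_ge0 F_ge0; apply: sumr_ge0 => x _; rewrite mulr_ge0. Qed.

Lemma ler_expect P F G :
  (forall x, 0 <= P x) -> (forall x, F x <= G x) -> expect P F <= expect P G.
Proof. by move=> P_ge0 FG; apply: ler_sum => x _; rewrite ler_wpM2l. Qed.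

Lemma expectD P F G : expect P (fun x => F x + G x) = expect P F + expect P G.
Proof. by rewrite -big_split; apply: eq_bigr => x _; rewrite mulrDr. Qed.

Lemma expectB P F G : expect P (fun x => F x - G x) = expect P F - expect P G.
Proof. by rewrite -sumrB; apply: eq_bigr => x _; rewrite mulrBr. Qed.

Lemma expectZ P (c : R) F : expect P (fun x => c * F x) = c * expect P F.
Proof. by rewrite mulr_sumr; apply: eq_bigr => x _; rewrite mulrCA. Qed.

Lemma expectZr P F (c : R) : expect P (fun x => F x * c) = expect P F * c.
Proof. by rewrite /expect mulr_suml; apply: eq_bigr => x _; rewrite mulrA. Qed.

Lemma expect_sum P (I : Type) (s : seq I) (F : I -> lab n -> R) :
  expect P (fun x => \sum_(t <- s) F t x) = \sum_(t <- s) expect P (F t).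
Proof.
by rewrite /expect; under eq_bigr do rewrite mulr_sumr; exact: exchange_big.
Qed.

Lemma expectDl P Q F : expect (fun x => P x + Q x) F = expect P F + expect Q F.
Proof. by rewrite -big_split; apply: eq_bigr => x _; rewrite mulrDl. Qed.

Lemma expect_sum_measure (I : Type) (s : seq I) (W : I -> lab n -> R) F :
  expect (fun x => \sum_(t <- s) W t x) F = \sum_(t <- s) expect (W t) F.
Proof.
by rewrite /expect /=; under eq_bigr do rewrite mulr_suml; exact: exchange_big.
Qed.

Lemma expect_cst P (c : R) : \sum_x P x = 1 -> expect P (fun=> c) = c.
Proof. by move=> P1; rewrite /expect -mulr_suml P1 mul1r. Qed.

(* [layer_prob P k], [joint1 P k i] and [joint0 P k i] are the paper's r_k, (p_k^1)_i
   and (p_k^0)_i, computed from P itself rather than from a point of Delta. *)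
Definition layer_prob P (k : nat) : R := expect P (fun x => (PP x == k)%:R).

Definition joint1 P (k : nat) (i : 'I_n) : R :=
  expect P (fun x => (PP x == k)%:R * (x i)%:R).

Definition joint0 P (k : nat) (i : 'I_n) : R :=
  expect P (fun x => (PP x == k)%:R * (~~ x i)%:R).

Lemma sum_indicator_nat (c : nat) (F : nat -> R) : (c <= n)%N ->
  \sum_(0 <= k < n.+1) (c == k)%:R * F k = F c.
Proof.
move=> c_le_n; rewrite big_mkord (bigD1 (Ordinal (c_le_n : c < n.+1)%N)) //=.
rewrite eqxx mul1r big1 ?addr0 // => k k_neq_c.
by move: k_neq_c; rewrite -val_eqE /= eq_sym => /negbTE ->; rewrite mul0r.
Qed.

Lemma sum_layer_prob P : \sum_x P x = 1 -> \sum_(0 <= k < n.+1) layer_prob P k = 1.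
Proof.
move=> P1; rewrite -expect_sum -[RHS](expect_cst 1 P1).
congr expect; apply/funext => x.
by under eq_bigr do rewrite -[_%:R]mulr1; rewrite sum_indicator_nat ?PP_le.
Qed.

Lemma sum_joint1 P k : \sum_i joint1 P k i = k%:R * layer_prob P k.
Proof.
rewrite -expect_sum -expectZ; congr expect; apply/funext => x.
rewrite -mulr_sumr mulrC; case: eqP => [<-|_]; last by rewrite !mulr0.
by rewrite /PP natr_sum.
Qed.

Lemma joint1_le_layer_prob P k i :
  (forall x, 0 <= P x) -> joint1 P k i <= layer_prob P k.
Proof.
move=> P_ge0; apply: ler_expect => // x.
by rewrite ler_piMr ?ler0n // lern1 leq_b1.
Qed.

Lemma joint1_layer0 P i : joint1 P 0 i = 0.
Proof.
apply: big1 => x _; case: eqP => [PP0|]; last by rewrite !mul0r mulr0.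
by have := lab_le_PP x i; rewrite PP0 leqn0 => /eqP ->; rewrite !mulr0.
Qed.

Lemma layer_measure_expect w K r v : layer_measure w K r v -> forall k F,
  expect w (fun x => (PP x == k)%:R * F x) = (k == K)%:R * expect w F.
Proof.
case=> _ w_supp _ _ k F; rewrite -expectZ; apply: eq_bigr => x _.
have [->|/w_supp PPx] := eqVneq (w x) 0; first by rewrite !mul0r.
by rewrite PPx eq_sym.
Qed.

End Expectation.

Section ProductExpectation.
Variables (R : numDomainType) (n : nat).
Implicit Types (P Q : lab n -> R) (F G : lab n -> lab n -> R).

Definition expect2 P Q F : R := expect P (fun yh => expect Q (F yh)).

Lemma eq_expect2 P Q F G :
  (forall yh yc, F yh yc = G yh yc) -> expect2 P Q F = expect2 P Q G.
Proof. by move=> FG; congr expect2; apply/funext => yh; apply/funext => yc. Qed.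

Lemma expect2D P Q F G :
  expect2 P Q (fun yh yc => F yh yc + G yh yc) = expect2 P Q F + expect2 P Q G.
Proof. by rewrite /expect2 -expectD; congr expect; apply/funext => yh; rewrite expectD. Qed.

Lemma expect2B P Q F G :
  expect2 P Q (fun yh yc => F yh yc - G yh yc) = expect2 P Q F - expect2 P Q G.
Proof. by rewrite /expect2 -expectB; congr expect; apply/funext => yh; rewrite expectB. Qed.

Lemma expect2Z P Q (c : R) F :
  expect2 P Q (fun yh yc => c * F yh yc) = c * expect2 P Q F.
Proof. by rewrite /expect2 -expectZ; congr expect; apply/funext => yh; rewrite expectZ. Qed.

Lemma expect2_sum P Q (I : Type) (s : seq I) (F : I -> lab n -> lab n -> R) :
  expect2 P Q (fun yh yc => \sum_(t <- s) F t yh yc) = \sum_(t <- s) expect2 P Q (F t).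
Proof.
rewrite /expect2 -expect_sum; congr expect; apply/funext => yh.
by rewrite expect_sum.
Qed.

Lemma expect2_mul P Q (F G : lab n -> R) :
  expect2 P Q (fun yh yc => F yh * G yc) = expect P F * expect Q G.
Proof.
rewrite -expectZr; congr expect; apply/funext => yh.
by rewrite expectZ.
Qed.

Lemma expect2_sum_mul P Q (I : Type) (s : seq I) (F G : I -> lab n -> R) :
  expect2 P Q (fun yh yc => \sum_(t <- s) F t yh * G t yc)
  = \sum_(t <- s) expect P (F t) * expect Q (G t).
Proof. by rewrite expect2_sum; apply: eq_bigr => t _; rewrite expect2_mul. Qed.

Lemma expect2_indep_l P Q (G : lab n -> R) :
  \sum_x P x = 1 -> expect2 P Q (fun _ yc => G yc) = expect Q G.
Proof. by move=> P1; rewrite /expect2 expect_cst. Qed.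

End ProductExpectation.

Section MarginalMatrix.
Variables (R : realType) (n : nat).
Implicit Types (P : lab n -> R).

Definition marginal_matrix P : 'M[R]_n := \matrix_(i, k) joint1 P k.+1 i.

Lemma marginal_matrix_col P (k : 'I_n) :
  (k.+1)%:R^-1 * \sum_i marginal_matrix P i k = layer_prob P k.+1.
Proof.
under eq_bigr do rewrite mxE.
by rewrite sum_joint1 mulKf ?pnatr_eq0.
Qed.

Lemma dist_inDelta P : is_dist P -> inDelta (marginal_matrix P).
Proof.
move=> P_dist; have [P_ge0 _] := P_dist.
split=> [i k|i k|].
- by rewrite mxE; apply: expect_ge0 => // x; rewrite mulr_ge0 ?ler0n.
- by rewrite marginal_matrix_col mxE joint1_le_layer_prob.
- under eq_bigr do rewrite marginal_matrix_col.
  rewrite -(sum_layer_prob P_dist.2) big_mkord big_ord_recl lerDr.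
  by apply: expect_ge0 => // x; rewrite ler0n.
Qed.

Lemma inDelta_dist (Q : 'M[R]_n) :
  inDelta Q -> exists2 P, is_dist P & marginal_matrix P = Q.
Proof.
case=> Q_ge0 Q_le Q_sum.
pose r (k : 'I_n) := (k.+1)%:R^-1 * \sum_j Q j k.
have r_ge0 k : 0 <= r k by rewrite mulr_ge0 ?invr_ge0 ?ler0n ?sumr_ge0.
have col_layer (k : 'I_n) : exists w, layer_measure w k.+1 (r k) (fun i => Q i k).
  apply: hypersimplex_layer_measure => // [i|]; first by rewrite Q_ge0 Q_le.
  by rewrite /r mulrA mulfV ?mul1r ?pnatr_eq0.
have [w w_layer] := boolp.choice col_layer.
pose r0 := 1 - \sum_k r k.
pose w0 x := if x == zero_lab n then r0 else 0.
have w0_layer : layer_measure w0 0 r0 (fun=> 0).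
  by apply: layer_measure_zero_lab; rewrite // subr_ge0.
exists (fun x => w0 x + \sum_k w k x).
  have [w0_ge0 _ w0_mass _] := w0_layer.
  split=> [x|].
    by rewrite addr_ge0 ?sumr_ge0 // => k _; have [] := w_layer k.
  rewrite big_split exchange_big /= w0_mass.
  rewrite (eq_bigr r) => [|k _]; last by have [] := w_layer k.
  by rewrite subrK.
apply/matrixP => i k; rewrite mxE /joint1 expectDl expect_sum_measure.
rewrite (layer_measure_expect w0_layer) mul0r add0r.
under eq_bigr do rewrite (layer_measure_expect (w_layer _)) eqSS.
rewrite (bigD1 k) //= eqxx mul1r big1 ?addr0 => [|k' k'_neq_k].
  by have [_ _ _] := w_layer k; apply.
by rewrite val_eqE eq_sym (negbTE k'_neq_k) mul0r.
Qed.

Lemma image_marginal_matrix :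
  marginal_matrix @` [set P | is_dist P] = [set Q | inDelta Q].
Proof.
apply/seteqP; split=> [_ [P P_dist <-]|Q Q_Delta]; first exact: dist_inDelta.
by have [P P_dist PQ] := inDelta_dist Q_Delta; exists P.
Qed.

Lemma p1_marginal_matrix P k i :
  (k <= n)%N -> p1 (marginal_matrix P) k i = joint1 P k i.
Proof.
rewrite /p1; case: k => [_|k k_lt_n] /=; first by rewrite joint1_layer0.
by rewrite (insubT (fun k => k < n)%N k_lt_n) mxE.
Qed.

Lemma rpos_marginal_matrix P k :
  (0 < k <= n)%N -> rpos (marginal_matrix P) k = layer_prob P k.
Proof.
case/andP=> k_gt0 k_le_n; rewrite /rpos.
under eq_bigr do rewrite p1_marginal_matrix //.
by rewrite sum_joint1 mulKf // pnatr_eq0 -lt0n.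
Qed.

Lemma rr_marginal_matrix P k :
  is_dist P -> (k <= n)%N -> rr (marginal_matrix P) k = layer_prob P k.
Proof.
move=> P_dist k_le_n; rewrite /rr; case: eqP => [->|/eqP k_neq0].
  rewrite (eq_big_nat _ _ (F2 := layer_prob P)) => [|k' k'_range].
    by rewrite -(sum_layer_prob P_dist.2) [X in X - _]big_ltn // addrK.
  exact: rpos_marginal_matrix.
by rewrite rpos_marginal_matrix // lt0n k_neq0.
Qed.

Lemma p0_marginal_matrix P k i :
  is_dist P -> (k <= n)%N -> p0 (marginal_matrix P) k i = joint0 P k i.
Proof.
move=> P_dist k_le_n; rewrite /p0 rr_marginal_matrix // p1_marginal_matrix //.
rewrite -expectB; congr expect; apply/funext => x.
by case: (x i); rewrite /= ?mulr1 ?mulr0 ?subrr ?subr0.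
Qed.

Lemma marg_marginal_matrix P i :
  marg (marginal_matrix P) i = expect P (fun x => (x i)%:R).
Proof.
rewrite /marg; under eq_bigr do rewrite mxE.
transitivity (\sum_(k < n.+1) joint1 P k i).
  by rewrite big_ord_recl joint1_layer0 add0r.
rewrite -expect_sum; congr expect; apply/funext => x.
rewrite -(big_mkord xpredT (fun k => (PP x == k)%:R * (x i)%:R)).
by rewrite sum_indicator_nat ?PP_le.
Qed.

End MarginalMatrix.

Lemma dotc_mulmx (R : realType) n m (Psi : 'M[R]_(m, n)) (theta : 'cV[R]_m)
    (v : 'cV[R]_n) :
  dotc theta (Psi *m v) = dotn (fun i => v i 0) (PsiTtheta Psi theta).
Proof.
rewrite /dotc /dotn /PsiTtheta; under eq_bigr do rewrite mxE mulr_sumr.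
rewrite exchange_big; apply: eq_bigr => i _; rewrite mulr_sumr.
by apply: eq_bigr => d _; ring.
Qed.

Section GameValue.
Variables (R : realType) (n m J : nat).
Variables (a b : 'I_J -> R) (f g : 'I_J -> nat -> nat -> R).
Variables (Psi : 'M[R]_(m, n)) (y : lab n).
Implicit Types (P Q : lab n -> R) (yh yc : lab n).

Lemma metric_by_layers yh yc :
  metric a b f g yh yc =
  \sum_(0 <= k < n.+1) \sum_(0 <= l < n.+1) \sum_(j < J) (g j k l)^-1 *
    (a j * \sum_i ((PP yh == k)%:R * (yh i)%:R) * ((PP yc == l)%:R * (yc i)%:R)
     + b j * \sum_i ((PP yh == k)%:R * (~~ yh i)%:R) * ((PP yc == l)%:R * (~~ yc i)%:R)
     + f j k l * ((PP yh == k)%:R * (PP yc == l)%:R)).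
Proof.
have sum_scale (c d : R) (u v : 'I_n -> R) :
    \sum_i (c * u i) * (d * v i) = c * d * \sum_i u i * v i.
  by rewrite mulr_sumr; apply: eq_bigr => i _; ring.
have TPE : (TP yh yc)%:R = \sum_i (yh i)%:R * (yc i)%:R :> R.
  by rewrite natr_sum; apply: eq_bigr => i _; rewrite -natrM mulnb.
have TNE : (TN yh yc)%:R = \sum_i (~~ yh i)%:R * (~~ yc i)%:R :> R.
  by rewrite natr_sum; apply: eq_bigr => i _; rewrite -natrM mulnb.
transitivity (\sum_(0 <= k < n.+1) (PP yh == k)%:R *
    \sum_(0 <= l < n.+1) (PP yc == l)%:R *
    \sum_(j < J) (g j k l)^-1 * (a j * (TP yh yc)%:R + b j * (TN yh yc)%:R + f j k l)).
  rewrite sum_indicator_nat ?PP_le // sum_indicator_nat ?PP_le //.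
  by apply: eq_bigr => j _; rewrite mulrC.
apply: eq_bigr => k _; rewrite mulr_sumr; apply: eq_bigr => l _.
rewrite !mulr_sumr; apply: eq_bigr => j _.
by rewrite !sum_scale TPE TNE; ring.
Qed.

Lemma expect2_metric P Q :
  expect2 P Q (metric a b f g) =
  \sum_(0 <= k < n.+1) \sum_(0 <= l < n.+1) \sum_(j < J) (g j k l)^-1 *
    (a j * \sum_i joint1 P k i * joint1 Q l i + b j * \sum_i joint0 P k i * joint0 Q l i
     + f j k l * (layer_prob P k * layer_prob Q l)).
Proof.
rewrite (eq_expect2 P Q metric_by_layers) expect2_sum; apply: eq_bigr => k _.
rewrite expect2_sum; apply: eq_bigr => l _.
rewrite expect2_sum; apply: eq_bigr => j _.
by rewrite expect2Z !expect2D !expect2Z !expect2_sum_mul expect2_mul.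
Qed.

Lemma game_value_marginal theta P Q : is_dist P -> is_dist Q ->
  game_value a b f g Psi y theta P Q =
  marg_objective a b f g Psi theta (marginal_matrix P) (marginal_matrix Q)
  + dotn (fun i => (y i)%:R) (PsiTtheta Psi theta).
Proof.
move=> P_dist Q_dist.
set PT := PsiTtheta Psi theta; set c := dotn _ PT.
have -> : game_value a b f g Psi y theta P Q = expect2 P Q (fun yh yc =>
    metric a b f g yh yc - dotc theta (Psi *m (labvec R yc - labvec R y))).
  rewrite /game_value /expect2 /expect; apply: eq_bigr => yh _.
  by rewrite mulr_sumr; apply: eq_bigr => yc _; rewrite mulrA.
rewrite expect2B expect2_metric /marg_objective.
rewrite (eq_expect2 P Q (G := fun _ yc => \sum_i (yc i)%:R * PT i - c)); last first.
  move=> yh yc; rewrite dotc_mulmx /dotn -sumrB.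
  by apply: eq_bigr => i _; rewrite !mxE mulrBl.
rewrite expect2_indep_l ?P_dist.2 // expectB expect_cst ?Q_dist.2 // expect_sum.
rewrite opprB addrA addrAC.
congr (_ - _ + _).
- apply: eq_big_nat => k /andP[_ k_le_n]; apply: eq_big_nat => l /andP[_ l_le_n].
  apply: eq_bigr => j _; rewrite /dotn !rr_marginal_matrix // mulrA.
  congr (_ * (_ * _ + _ * _ + _)); apply: eq_bigr => i _.
    by rewrite !p1_marginal_matrix.
  by rewrite !p0_marginal_matrix.
- by apply: eq_bigr => i _; rewrite marg_marginal_matrix expectZr.
Qed.

End GameValue.

Local Open Scope ereal_scope.

Lemma ereal_sup_shift (R : realType) T (A : set T) (H : T -> \bar R) (c : R) :
  ereal_sup [set H t + c%:E | t in A] = ereal_sup [set H t | t in A] + c%:E.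
Proof.
apply/le_anti/andP; split.
- apply: ge_ereal_sup => _ [t At <-].
  by rewrite leeD2r //; apply: ereal_sup_ubound; exists t.
- rewrite -leeBrDr //; apply: ge_ereal_sup => _ [t At <-].
  by rewrite leeBrDr //; apply: ereal_sup_ubound; exists t.
Qed.

Lemma ereal_inf_shift (R : realType) T (A : set T) (H : T -> \bar R) (c : R) :
  ereal_inf [set H t + c%:E | t in A] = ereal_inf [set H t | t in A] + c%:E.
Proof.
apply/le_anti/andP; split.
- rewrite -leeBlDr //; apply: le_ereal_inf_tmp => _ [t At <-].
  by rewrite leeBlDr //; apply: ereal_inf_lbound; exists t.
- apply: le_ereal_inf_tmp => _ [t At <-].
  by rewrite leeD2r //; apply: ereal_inf_lbound; exists t.
Qed.

Theorem theorem2 (R : realType) (n m J : nat) (hn : (0 < n)%N) (hm : (0 < m)%N)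
  (y : lab n) (Psi : 'M[R]_(m, n))
  (a b : 'I_J -> R) (f g : 'I_J -> nat -> nat -> R)
  (hg : forall j k l, (k <= n)%N -> (l <= n)%N -> g j k l != 0%R) :
  ereal_sup [set ereal_inf [set ereal_sup
        [set (game_value a b f g Psi y theta P Q)%:E | P in [set P | is_dist P]]
      | Q in [set Q | is_dist Q]] | theta in [set: 'cV[R]_m]]
  =
  ereal_sup [set ereal_inf [set ereal_sup
        [set (marg_objective a b f g Psi theta P Q)%:E | P in [set P | inDelta P]]
      | Q in [set Q | inDelta Q]]
      + (dotn (fun i => (y i)%:R) (PsiTtheta Psi theta))%:E
    | theta in [set: 'cV[R]_m]].
Proof.
rewrite -image_marginal_matrix; congr ereal_sup; apply: eq_imagel => theta _.
rewrite -ereal_inf_shift image_comp; congr ereal_inf; apply: eq_imagel => Q Q_dist /=.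
rewrite -ereal_sup_shift image_comp; congr ereal_sup; apply: eq_imagel => P P_dist /=.
by rewrite game_value_marginal.
Qed.
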